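(* Let $\kappa$ be an infinite cardinal and let $B(\kappa)=(\kappa^{\aleph_0},\mathcal U)$ be the countable power of the discrete uniform space of cardinality $\kappa$. Then $B(\kappa)$ is co-universal in the class of all non-archimedean uniform spaces whose uniformity is induced by a complete metric and whose topological weight is $\le\kappa$: that is, $B(\kappa)$ belongs to this class, and for every (nonempty) $Y$ in this class there exists a uniformly continuous surjection $f\colon B(\kappa)\to Y$ which is a quotient map of topological spaces.
   Context: A uniform space is non-archimedean if its uniformity has a base consisting of equivalence relations. All uniform spaces are Hausdorff. *)

From HB Require Import structures.
From mathcomp Require Import all_boot all_order all_algebra.
From mathcomp Require Import all_classical all_reals.
From mathcomp Require Import topology.
Set Implicit Arguments. Unset Strict Implicit. Unset Printing Implicit Defensive.
Import Order.TTheory GRing.Theory Num.Theory.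
Local Open Scope classical_set_scope.
Local Open Scope ring_scope.

Definition equiv_rel_set {U : Type} (E : set (U * U)) : Prop :=
  [/\ (forall x, E (x, x)),
      (forall x y, E (x, y) -> E (y, x)) &
      (forall x y z, E (x, y) -> E (y, z) -> E (x, z))].

Definition non_archimedean (U : uniformType) : Prop :=
  forall E : set (U * U), entourage E ->
    exists F : set (U * U), [/\ entourage F, equiv_rel_set F & F `<=` E].

Definition is_metric {R : realType} {U : Type} (d : U -> U -> R) : Prop :=
  [/\ (forall x y, 0 <= d x y),
      (forall x y, d x y = 0 <-> x = y),
      (forall x y, d x y = d y x) &
      (forall x y z, d x z <= d x y + d y z)].

Definition induces_uniformity {R : realType} {U : uniformType}
  (d : U -> U -> R) : Prop :=
  forall E : set (U * U),
    entourage E <-> exists2 e : R, 0 < e & [set p | d p.1 p.2 < e] `<=` E.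

Definition complete_metric {R : realType} {U : Type} (d : U -> U -> R) : Prop :=
  forall u : nat -> U,
    (forall e : R, 0 < e -> exists N : nat,
       forall m n, (N <= m)%N -> (N <= n)%N -> d (u m) (u n) < e) ->
    exists x : U, forall e : R, 0 < e -> exists N : nat,
       forall n, (N <= n)%N -> d (u n) x < e.

Definition complete_metrizable_unif (R : realType) (U : uniformType) : Prop :=
  exists d : U -> U -> R, [/\ is_metric d, induces_uniformity d & complete_metric d].

Definition weight_le (U : uniformType) (K : Type) : Prop :=
  exists2 B : set (set U), basis B & (B #<= [set: K])%card.

Definition in_class (R : realType) (K : Type) (U : uniformType) : Prop :=
  [/\ non_archimedean U, complete_metrizable_unif R U & weight_le U K].

Definition Bk (K : choiceType) : uniformType :=
  {ptws nat -> discrete_topology K}.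

Definition quotient_map {X Y : topologicalType} (f : X -> Y) : Prop :=
  [/\ continuous f,
      (forall y, exists x, f x = y) &
      (forall A : set Y, open (f @^-1` A) -> open A)].

From HB Require Import structures.
From mathcomp Require Import all_boot all_order all_algebra.
From mathcomp Require Import all_classical all_reals.
From mathcomp Require Import finmap topology.
Set Implicit Arguments. Unset Strict Implicit. Unset Printing Implicit Defensive.
Import Order.TTheory GRing.Theory Num.Theory.
Local Open Scope classical_set_scope.

(* B(kappa) is a complete ultrametric space for the distance 1/(n+1), where n is
   the first index at which two sequences differ; its cylinders are indexed by
   finite sequences over kappa, and there are only kappa of them because
   kappa * kappa injects into kappa (Zorn's lemma on partial pairing functions).

   Conversely, a complete non-archimedean Y of weight <= kappa has a decreasing
   base (E n) of equivalence entourages and a base (G k) indexed by kappa.  Read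
   x in kappa^N as a path: at step n move to a point of G (x n) in the E n-class
   of the current point, if there is one.  The path is E-Cauchy and its limit
   f x is determined up to E n by the first n letters of x, so f is uniformly
   continuous.  Coding y by basic sets shrinking to y gives f (code y) = y, and
   any z in the E n-class of y is the image of the sequence that follows the
   code of y for n steps and the code of z afterwards: the image of every
   cylinder around code y contains an E-neighbourhood of y, which makes f a
   quotient map. *)

(** * Cardinal arithmetic *)

Lemma Zorn_bigcup_above T (P : set (set T)) (s0 : set T) : P s0 ->
  (forall F : set (set T), F `<=` P -> total_on F subset ->
     P (\bigcup_(X in F) X)) ->
  exists A, [/\ P A, s0 `<=` A & forall B, A `<` B -> ~ P B].
Proof.
move=> Ps0 Pchain.
have [A [PAs0 Amax]] : exists A, P (A `|` s0) /\ forall B, A `<` B -> ~ P (B `|` s0).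
  apply: Zorn_bigcup => F FP Ftot.
  have -> : \bigcup_(X in F) X `|` s0 =
      \bigcup_(X in [set s0] `|` [set X `|` s0 | X in F]) X.
    apply/seteqP; split => [x [[X FX Xx]|s0x]|x [_ [->|[X FX <-]] Xx]].
    - by exists (X `|` s0); [right; exists X|left].
    - by exists s0; [left|].
    - by right.
    - by case: Xx => [Xx|]; [left; exists X|right].
  apply: Pchain; first by move=> _ [->|[X /FP PX <-]].
  move=> _ _ [->|[X FX <-]] [->|[Y FY <-]];
    try by [left|right|left; apply: subsetUr|right; apply: subsetUr].
  by case: (Ftot X Y) => // XY; [left|right]; exact: setSU.
exists (A `|` s0); split => // B AB PB.
have s0B : s0 `<=` B := subset_trans (@subsetUr _ A s0) (properW AB).
apply: (Amax B); last by rewrite setUidl.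
split; first exact: subset_trans (@subsetUl _ A s0) (properW AB).
by move=> BA; case: AB => _; apply; apply: subset_trans BA (@subsetUl _ A s0).
Qed.

Lemma total_bigcup2 T (F : set (set T)) p q : total_on F subset ->
  (\bigcup_(X in F) X) p -> (\bigcup_(X in F) X) q ->
  exists2 X, F X & X p /\ X q.
Proof.
move=> Ftot [X FX Xp] [Y FY Yq].
case: (Ftot X Y FX FY) => [XY|YX]; first by exists Y => //; split => //; apply: XY.
by exists X => //; split => //; apply: YX.
Qed.

Lemma set_inj_compare T (A B : set T) :
  (exists2 f : T -> T, set_fun A B f & set_inj A f) \/
  (exists2 g : T -> T, set_fun B A g & set_inj B g).
Proof.
pose partial_bij (A' B' : set T) (R : set (T * T)) :=
  [/\ R `<=` A' `*` B',
      forall x y y', R (x, y) -> R (x, y') -> y = y' &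
      forall x x' y, R (x, y) -> R (x', y) -> x = x'].
have total_inj A' B' R : partial_bij A' B' R ->
    (forall x, A' x -> exists y, R (x, y)) ->
    exists2 f : T -> T, set_fun A' B' f & set_inj A' f.
  move=> [RAB Rfun Rinj] Rtot.
  pose f x := if pselect (exists y, R (x, y)) is left ex then sval (cid ex) else x.
  have Rf x : A' x -> R (x, f x).
    by move=> /Rtot ex; rewrite /f; case: pselect => // ex'; exact: svalP (cid ex').
  exists f => [x /Rf /RAB[]//|x x' /set_mem/Rf Rx /set_mem/Rf + fxx'].
  by rewrite -fxx'; exact: Rinj.
have [R [PR Rmax]] : exists R,
    partial_bij A B R /\ forall R', R `<` R' -> ~ partial_bij A B R'.
  apply: Zorn_bigcup => F FP Ftot; split.
  - by move=> p [X /FP[XAB _ _] /XAB].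
  - move=> x y y' Rxy Rxy'.
    by have [X /FP[_ Xfun _] [/Xfun]] := total_bigcup2 Ftot Rxy Rxy'; apply.
  - move=> x x' y Rxy Rx'y.
    by have [X /FP[_ _ Xinj] [/Xinj]] := total_bigcup2 Ftot Rxy Rx'y; apply.
have [RAB Rfun Rinj] := PR.
have [Rtot|/existsNP[x0 /not_implyP[Ax0 nx0]]] :=
  pselect (forall x, A x -> exists y, R (x, y)).
  by left; exact: total_inj PR Rtot.
have [Rsurj|/existsNP[y0 /not_implyP[By0 ny0]]] :=
  pselect (forall y, B y -> exists x, R (x, y)).
  right; apply: (total_inj _ _ [set p | R (p.2, p.1)]) => //.
  split=> [[y x] /RAB[]//|y x x' Rxy Rx'y|y y' x Ryx Ry'x].
    exact: Rinj Rxy Rx'y.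
  exact: Rfun Ryx Ry'x.
exfalso; apply: (Rmax (R `|` [set (x0, y0)])).
  split => [p Rp|]; first by left.
  by move=> /(_ (x0, y0) (or_intror erefl)) Rx0; apply: nx0; exists y0.
split.
- by move=> p [/RAB//|->].
- move=> x y y' [Rxy|/pair_equal_spec[-> ->]] [Rxy'|/pair_equal_spec[xx0 ->]] //.
  + exact: Rfun Rxy Rxy'.
  + by case: nx0; rewrite -xx0; exists y.
  + by case: nx0; exists y'.
- move=> x x' y [Rxy|/pair_equal_spec[-> ->]] [Rx'y|/pair_equal_spec[-> yy0]] //.
  + exact: Rinj Rxy Rx'y.
  + by case: ny0; rewrite -yy0; exists x.
  + by case: ny0; exists x'.
Qed.

Lemma infinite_nat_inj T : infinite_set [set: T] -> exists e : nat -> T, injective e.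
Proof.
move=> /infiniteP /card_leP [f].
exists (fun n => set_val (f (SigSub (mem_set (I : [set: nat] n))))).
by move=> m n fmn; have := congr1 set_val (injT (val_inj fmn)).
Qed.

Section pairing.
Variable T : Type.

Record pairing_on (S : set T) (g : T -> T -> T) : Prop := {
  pairing_mem : forall a b, S a -> S b -> S (g a b);
  pairing_inj : forall a b a' b', S a -> S b -> S a' -> S b' ->
    g a b = g a' b' -> a = a' /\ b = b' }.

Lemma pairing_on_range (e : nat -> T) : injective e ->
  exists g, pairing_on (range e) g.
Proof.
move=> einj.
pose idx x := if pselect (exists n, e n = x) is left ex then sval (cid ex) else 0%N.
have idxK n : idx (e n) = n.
  rewrite /idx; case: pselect => [ex|]; last by case; exists n.
  by apply: einj; exact: svalP (cid ex).
exists (fun x y => e (choice.pickle (idx x, idx y))); split => [a b _ _|].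
  by exists (choice.pickle (idx a, idx b)).
move=> _ _ _ _ [m _ <-] [n _ <-] [m' _ <-] [n' _ <-] /einj/(pcan_inj choice.pickleK).
by rewrite !idxK => -[-> ->].
Qed.

(* A pair with a coordinate in h(S) is sent to h of a code in S of its pattern
   (which coordinates lie outside S) and of the h-preimages of its coordinates. *)
Lemma pairing_on_extend S g h (tag : bool * bool -> T) :
  pairing_on S g -> injective tag -> (forall t, S (tag t)) ->
  set_fun S (~` S) h -> set_inj S h ->
  exists g', pairing_on (S `|` h @` S) g' /\
             forall a b, S a -> S b -> g' a b = g a b.
Proof.
move=> [gS ginj] taginj tagS hS hinj.
pose unlift x := if pselect (exists2 a, S a & h a = x) is left ex
  then s2val (cid2 ex) else x.
have unliftS x : (S `|` h @` S) x -> S (unlift x).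
  rewrite /unlift; case: pselect => [ex _|nex [//|[a Sa hax]]].
    exact: s2valP (cid2 ex).
  by case: nex; exists a.
have unliftK x : (S `|` h @` S) x ->
    x = if x \in S then unlift x else h (unlift x).
  rewrite /unlift; case: pselect => [ex|nex]; case: ifPn => [/set_mem Sx|nSx] //.
  - by case: (cid2 ex) => a Sa hax; case: (hS a Sa); rewrite hax.
  - by rewrite (s2valP' (cid2 ex)).
  - by case=> [Sx|[a Sa hax]]; [move: nSx; rewrite (mem_set Sx)|case: nex; exists a].
pose g' x y := if (x \in S) && (y \in S) then g x y
  else h (g (tag (x \notin S, y \notin S)) (g (unlift x) (unlift y))).
have g'new x y : (S `|` h @` S) x -> (S `|` h @` S) y ->
    S (g (tag (x \notin S, y \notin S)) (g (unlift x) (unlift y))).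
  by move=> S'x S'y; apply: (gS); [exact: tagS|apply: (gS); exact: unliftS].
exists g'; split; last by move=> a b Sa Sb; rewrite /g' !mem_set.
split=> [x y S'x S'y|x y x' y' S'x S'y S'x' S'y'].
  rewrite /g'; case: ifPn => [/andP[/set_mem Sx /set_mem Sy]|_]; first by left; exact: (gS).
  by right; exists (g (tag (x \notin S, y \notin S)) (g (unlift x) (unlift y))); [exact: g'new|].
rewrite /g'; case: ifPn => [/andP[/set_mem Sx /set_mem Sy]|_];
    case: ifPn => [/andP[/set_mem Sx' /set_mem Sy']|_].
- exact: ginj.
- by move=> gxy; case: (hS _ (g'new _ _ S'x' S'y')); rewrite -gxy; exact: (gS).
- by move=> gxy; case: (hS _ (g'new _ _ S'x S'y)); rewrite gxy; exact: (gS).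
move=> /(hinj _ _ (mem_set (g'new _ _ S'x S'y)) (mem_set (g'new _ _ S'x' S'y'))).
move=> /ginj[]; try by [apply: tagS|apply: (gS); exact: unliftS].
move=> /taginj[/negb_inj xx' /negb_inj yy'] /ginj[]; try exact: unliftS.
move=> ux uy.
by rewrite (unliftK x) // (unliftK y) // (unliftK x') // (unliftK y') // xx' yy' ux uy.
Qed.

Lemma pairing_absorb S g (tag : bool -> T) j :
  pairing_on S g -> injective tag -> (forall t, S (tag t)) ->
  set_fun (~` S) S j -> set_inj (~` S) j -> exists p : T * T -> T, injective p.
Proof.
move=> [gS ginj] taginj tagS jS jinj.
pose phi x := g (tag (x \in S)) (if x \in S then x else j x).
have phiarg x : S (if x \in S then x else j x).
  case: ifPn => [/set_mem //|nSx]; apply: jS => Sx.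
  by move: nSx; rewrite (mem_set Sx).
have phiS x : S (phi x) by apply: (gS); [exact: tagS|exact: phiarg].
have phiinj : injective phi.
  move=> x x' /ginj[]; try exact: tagS; try exact: phiarg.
  move=> /taginj xx'; rewrite -xx'; case: ifPn => // nSx.
  have nSx' : x' \notin S by rewrite -xx'.
  by apply: jinj; apply: mem_set => /mem_set Sx; [move: nSx|move: nSx']; rewrite Sx.
exists (fun p => g (phi p.1) (phi p.2)) => -[x y] [x' y'] /= /ginj[] //.
by move=> /phiinj -> /phiinj ->.
Qed.

(* A set S together with the graph of g on S * S, packed into one set so that
   Zorn's lemma for inclusion applies. *)
Definition pairing_graph (S : set T) (g : T -> T -> T) : set (T + T * T * T) :=
  fun w => match w with
  | inl a => S a
  | inr (a, b, c) => [/\ S a, S b & c = g a b]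
  end.

Definition partial_pairing (W : set (T + T * T * T)) : Prop :=
  [/\ forall a b c c', W (inr (a, b, c)) -> W (inr (a, b, c')) -> c = c',
      forall a b a' b' c, W (inr (a, b, c)) -> W (inr (a', b', c)) ->
        a = a' /\ b = b',
      forall a b c, W (inr (a, b, c)) -> [/\ W (inl a), W (inl b) & W (inl c)] &
      forall a b, W (inl a) -> W (inl b) -> exists c, W (inr (a, b, c))].

Lemma partial_pairing_bigcup (F : set (set (T + T * T * T))) :
  F `<=` partial_pairing -> total_on F subset ->
  partial_pairing (\bigcup_(W in F) W).
Proof.
move=> FP Ftot; split.
- move=> a b c c' Wc Wc'.
  by have [W /FP[Wfun _ _ _] [/Wfun]] := total_bigcup2 Ftot Wc Wc'; apply.
- move=> a b a' b' c Wab Wab'.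
  by have [W /FP[_ Winj _ _] [/Winj]] := total_bigcup2 Ftot Wab Wab'; apply.
- move=> a b c [W FW]; have [_ _ Wmem _] := FP W FW.
  by move=> /Wmem[Wa Wb Wc]; split; exists W.
- move=> a b Wa Wb.
  have [W FW [Wa' Wb']] := total_bigcup2 Ftot Wa Wb.
  have [_ _ _ Wtot] := FP W FW.
  by have [c Wc] := Wtot a b Wa' Wb'; exists c, W.
Qed.

Lemma pairing_graphP S g : pairing_on S g -> partial_pairing (pairing_graph S g).
Proof.
move=> gP; split.
- by move=> a b c c' [_ _ ->] [_ _ ->].
- by move=> a b a' b' c [Sa Sb ->] [Sa' Sb']; exact: (pairing_inj gP).
- by move=> a b c [Sa Sb ->]; split => //; exact: (pairing_mem gP).
- by move=> a b Sa Sb; exists (g a b).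
Qed.

Lemma partial_pairingP W : partial_pairing W ->
  exists g, pairing_on [set a | W (inl a)] g /\
            W `<=` pairing_graph [set a | W (inl a)] g.
Proof.
move=> [Wfun Winj Wmem Wtot].
pose g a b := if pselect (exists c, W (inr (a, b, c))) is left ex
  then sval (cid ex) else a.
have Wg a b : W (inl a) -> W (inl b) -> W (inr (a, b, g a b)).
  move=> Wa Wb; rewrite /g; case: pselect => [ex|]; first exact: svalP (cid ex).
  by case; exact: Wtot.
exists g; split; first split.
- by move=> a b Wa Wb; have [] := Wmem _ _ _ (Wg a b Wa Wb).
- move=> a b a' b' Wa Wb Wa' Wb' gab.
  by apply: (Winj _ _ _ _ (g a b) (Wg a b Wa Wb)); rewrite gab; exact: Wg.
move=> [a //|[[a b] c] Wc].
have [Wa Wb _] := Wmem _ _ _ Wc.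
by split => //; exact: Wfun Wc (Wg a b Wa Wb).
Qed.

Lemma infinite_square_inj : infinite_set [set: T] ->
  exists p : T * T -> T, injective p.
Proof.
(* Take a maximal partial pairing on some S containing a copy of nat.  Either
   the complement of S injects into S and the pairing absorbs it, or S injects
   into its complement by some h and the pairing extends to S `|` h @` S. *)
move=> /infinite_nat_inj[e einj].
have [g0 g0P] := pairing_on_range einj.
have [W [WP seedW Wmax]] :=
  Zorn_bigcup_above (pairing_graphP g0P) partial_pairing_bigcup.
have [g [gP Wg]] := partial_pairingP WP.
set S := [set a | W (inl a)] in gP Wg.
have eS n : S (e n) by apply: seedW; exists n.
have [[j jS jinj]|[h hS hinj]] := set_inj_compare (~` S) S.
  apply: (pairing_absorb (tag := fun b : bool => e b) gP _ _ jS jinj) => //.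
  by move=> [] [] /einj.
have [||g' [g'P g'g]] :=
  pairing_on_extend (tag := fun t => e (t.1 + 2 * t.2)%N) gP _ _ hS hinj => //.
  by move=> [[] []] [[] []] /einj.
exfalso; apply: (Wmax (pairing_graph (S `|` h @` S) g')); last exact: pairing_graphP.
split=> [[a Wa|[[a b] c] /Wg[Sa Sb ->]]|]; first by left.
  by split; [left|left|rewrite g'g].
by move=> /(_ (inl (h (e 0)))) /(_ (or_intror (imageP _ (eS 0)))); apply: hS.
Qed.

End pairing.

Lemma infinite_seq_inj T : infinite_set [set: T] ->
  exists q : seq T -> T, injective q.
Proof.
move=> Tinf; have [e einj] := infinite_nat_inj Tinf.
have [p pinj] := infinite_square_inj Tinf.
pose fix code (s : seq T) := if s is x :: r then p (x, code r) else e 0%N.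
exists (fun s => p (e (size s), code s)) => s s' /pinj [/einj].
elim: s s' => [|x r IH] [|x' r'] //= [/IH {}IH] /pinj [-> /IH ->] //.
Qed.

Lemma injective_card_le (T U : Type) (f : T -> U) : injective f ->
  ([set: T] #<= [set: U])%card.
Proof.
move=> finj; have /card_esym := @inj_card_eq _ _ [set: T] f (in2W finj).
rewrite card_eq_le => /andP[fTT _].
exact: card_le_trans fTT (card_leT _).
Qed.

(** * The space B(kappa) *)

Section Baire_space.
Variable K : choiceType.

Definition prefix_ent n : set (Bk K * Bk K) := [set p | same_prefix n p.1 p.2].

Lemma coord_entourage i : entourage [set p : Bk K * Bk K | p.1 i = p.2 i].
Proof.
rewrite /entourage /= /sup_ent.
have ent_i : `[< @entourage (initial_topology (fun f : Bk K => f i))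
                  [set p | p.1 i = p.2 i] >].
  apply/asboolP; exists (range (fun x : discrete_topology K => (x, x))) => //.
  by move=> [a b] /= [x _ [-> ->]].
exists [set p | p.1 i = p.2 i] => //.
exists [fset exist _ ((i : {classic nat}), [set p | p.1 i = p.2 i]) ent_i]%fset => //.
  by move=> x _; rewrite in_setT.
apply/seteqP; split => p /=; last by move=> hp j; rewrite /= inE => /eqP ->.
move=> /(_ (exist _ ((i : {classic nat}), [set p | p.1 i = p.2 i]) ent_i)).
by apply; rewrite /= inE.
Qed.

Lemma prefix_entourage n : entourage (prefix_ent n).
Proof.
elim: n => [|n IH].
  by rewrite (_ : prefix_ent 0 = setT); [exact: entourageT|apply/seteqP; split].
rewrite (_ : prefix_ent n.+1 = prefix_ent n `&` [set p | p.1 n = p.2 n]).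
  exact: filterI IH (coord_entourage n).
apply/seteqP; split => p /=.
  by move=> pn; split; [exact: same_prefix_leq (leqnSn n) pn|exact: pn n (ltnSn n)].
by move=> [pn pnn] i; rewrite ltEnat /= ltnS leq_eqVlt => /orP[/eqP ->//|]; exact: pn.
Qed.

Lemma Bk_entourageP E : entourage E -> exists n, prefix_ent n `<=` E.
Proof.
rewrite /entourage /= /sup_ent => -[A [F _ <-] AE].
exists (\max_(j <- F) ((projT1 j).1 : nat).+1)%N => p hp.
apply: AE => j jF.
have /asboolP[V /= entV VS] := projT2 j.
apply: VS; apply: entV; exists (p.1 (projT1 j).1) => //; congr pair; apply: hp.
rewrite ltEnat /=; exact: leq_bigmax_seq jF _.
Qed.

End Baire_space.

Lemma lt_inv_succ (R : numFieldType) (m n : nat) :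
  ((m.+1%:R : R)^-1 < n.+1%:R^-1)%R = (n < m)%N.
Proof. by rewrite ltf_pV2 ?posrE ?ltr0n // ltr_nat. Qed.

Lemma archi_inv_succ (R : archiFieldType) (e : R) :
  (0 < e)%R -> exists n : nat, (n.+1%:R^-1 < e)%R.
Proof.
move=> e0; exists (Num.Def.trunc e^-1).
rewrite -[ltRHS]invrK ltf_pV2 ?posrE ?invr_gt0 ?ltr0n //.
exact: truncnS_gt.
Qed.

Section Baire_metric.
Variables (R : realType) (K : choiceType).
Local Open Scope ring_scope.

Definition prefix_dist (x y : Bk K) : R :=
  if first_diff x y is Some n then n.+1%:R^-1 else 0.

Lemma prefix_dist_ge0 x y : 0 <= prefix_dist x y.
Proof. by rewrite /prefix_dist; case: (first_diff x y) => // n; rewrite invr_ge0. Qed.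

Lemma prefix_dist_lt x y n :
  prefix_dist x y < n.+1%:R^-1 <-> same_prefix n.+1 x y.
Proof.
rewrite /prefix_dist; case E: (first_diff x y) => [m|].
  move/first_diff_SomeP: E => [pm /eqP xym]; rewrite lt_inv_succ.
  split => [nm|pn]; first exact: same_prefix_leq nm pm.
  by rewrite ltnNge; apply/negP => mn; apply: xym; exact: pn m mn.
by move/first_diff_NoneP: E => ->; split => // _; rewrite invr_gt0 ltr0n.
Qed.

Lemma prefix_dist_triangle x y z :
  prefix_dist x z <= prefix_dist x y + prefix_dist y z.
Proof.
rewrite {1}/prefix_dist; case E: (first_diff x z) => [m|]; last first.
  by rewrite addr_ge0 // prefix_dist_ge0.
have [/prefix_dist_lt xy|ge1] := ltP (prefix_dist x y) m.+1%:R^-1; last first.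
  by apply: ler_wpDr ge1; exact: prefix_dist_ge0.
have [/prefix_dist_lt yz|ge2] := ltP (prefix_dist y z) m.+1%:R^-1; last first.
  by apply: ler_wpDl ge2; exact: prefix_dist_ge0.
move/first_diff_SomeP: E => [_ /eqP[]].
by rewrite (xy m (ltnSn m)) (yz m (ltnSn m)).
Qed.

Lemma prefix_dist_metric : is_metric prefix_dist.
Proof.
split=> [x y|x y|x y|]; first exact: prefix_dist_ge0; last exact: prefix_dist_triangle.
  rewrite /prefix_dist first_diff_NoneP; case: (first_diff x y) => [n|]; split => //.
  by move/eqP; rewrite invr_eq0 pnatr_eq0.
by rewrite /prefix_dist first_diff_sym.
Qed.

End Baire_metric.
Arguments prefix_dist {R K}.

Section Baire_space_in_class.
Variables (R : realType) (K : choiceType).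
Local Open Scope ring_scope.

Lemma prefix_ent_equiv n : equiv_rel_set (@prefix_ent K n).
Proof.
split=> [x|x y /same_prefix_sym //|x y z]; first exact: same_prefix_refl.
exact: same_prefix_trans.
Qed.

Lemma Bk_non_archimedean : non_archimedean (Bk K).
Proof.
move=> E /Bk_entourageP[n nE]; exists (prefix_ent n); split => //.
  exact: prefix_entourage.
exact: prefix_ent_equiv.
Qed.

Lemma prefix_dist_uniformity : induces_uniformity (@prefix_dist R K).
Proof.
move=> E; split.
  move=> /Bk_entourageP[n nE]; exists n.+1%:R^-1; first by rewrite invr_gt0 ltr0n.
  move=> [x y] /prefix_dist_lt xy; apply: nE => i ni; apply: xy.
  exact: ltn_trans ni (ltnSn n).
move=> [e e0 eE]; have [n ne] := archi_inv_succ e0.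
apply: filterS (prefix_entourage K n.+1) => -[x y] /= xy.
by apply: eE; apply: lt_trans ne; exact/prefix_dist_lt.
Qed.

Lemma prefix_dist_complete : complete_metric (@prefix_dist R K).
Proof.
move=> u Cu.
have /choice[N HN] : forall i : nat, exists N : nat, forall m n,
    (N <= m)%N -> (N <= n)%N -> prefix_dist (u m) (u n) < i.+1%:R^-1 :> R.
  by move=> i; apply: Cu; rewrite invr_gt0 ltr0n.
exists (fun i => u (N i) i) => e e0.
have [j je] := archi_inv_succ e0.
exists (\max_(i < j.+1) N i)%N => n Mn.
apply: lt_trans je; apply/prefix_dist_lt => i; rewrite ltEnat => ij.
have Nin : (N i <= n)%N.
  exact: leq_trans (@leq_bigmax _ (fun k : 'I_j.+1 => N k) (Ordinal ij)) Mn.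
by move/prefix_dist_lt: (HN i n (N i) Nin (leqnn _)) => /(_ i (ltnSn i)).
Qed.

Lemma Bk_weight : infinite_set [set: K] -> weight_le (Bk K) K.
Proof.
move=> Kinf; have [k0 _] := infinite_setN0 Kinf.
pose cylinder (s : seq K) := [set x : Bk K | same_prefix (size s) (nth k0 s) x].
exists (cylinder @` [set: seq K]); last first.
  have [q qinj] := infinite_seq_inj Kinf.
  exact: card_le_trans (card_image_le _ _) (injective_card_le qinj).
split.
  move=> _ [s _ <-]; rewrite openE => x sx.
  apply/nbhsP; exists (prefix_ent (size s)); first exact: prefix_entourage.
  by move=> y /set_mem xy; exact: same_prefix_trans sx xy.
move=> x A /nbhsP[E /Bk_entourageP[n nE] EA].
exists (cylinder (mkseq x n)).
  split; first by exists (mkseq x n).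
  by move=> i; rewrite size_mkseq => ni; rewrite nth_mkseq.
move=> y xy; apply: EA; apply/mem_set; apply: nE => i ni.
by rewrite /= -(nth_mkseq k0 x ni); apply: xy; rewrite size_mkseq.
Qed.

Lemma Bk_in_class : infinite_set [set: K] -> in_class R K (Bk K).
Proof.
move=> Kinf; split; [exact: Bk_non_archimedean| |exact: Bk_weight].
exists (@prefix_dist R K); split.
- exact: prefix_dist_metric.
- exact: prefix_dist_uniformity.
- exact: prefix_dist_complete.
Qed.

End Baire_space_in_class.

(** * Co-universality *)

Lemma nested_equiv_chain T (E : nat -> set (T * T)) (u : nat -> T) :
  (forall n, equiv_rel_set (E n)) -> (forall m n, (m <= n)%N -> E n `<=` E m) ->
  (forall n, E n (u n, u n.+1)) -> forall m n, (m <= n)%N -> E m (u m, u n).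
Proof.
move=> Eeq Edecr Eu m n /subnKC <-; elim: (n - m)%N => [|k IH].
  by rewrite addn0; case: (Eeq m).
case: (Eeq m) => _ _ Etrans; rewrite addnS; apply: Etrans IH _.
by apply: Edecr (Eu _); exact: leq_addr.
Qed.

Record complete_equiv_base (Y : uniformType) (E : nat -> set (Y * Y)) : Prop := {
  equiv_base0 : forall y z, E 0 (y, z);
  equiv_base_entourage : forall n, entourage (E n);
  equiv_base_equiv : forall n, equiv_rel_set (E n);
  equiv_base_decr : forall m n, (m <= n)%N -> E n `<=` E m;
  equiv_base_sub : forall U, entourage U -> exists n, E n `<=` U;
  equiv_base_sep : forall y z, (forall n, E n (y, z)) -> y = z;
  equiv_base_complete : forall u : nat -> Y,
    (forall n, E n (u n, u n.+1)) -> exists y, forall n, E n (u n, y) }.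

Section complete_equiv_base_of_metric.
Variables (R : realType) (Y : uniformType) (d : Y -> Y -> R).
Hypotheses (Ynonarch : non_archimedean Y) (dmetric : is_metric d)
  (dunif : induces_uniformity d) (dcomplete : complete_metric d).
Local Open Scope ring_scope.

Lemma equiv_ent_in_ball n : exists F : set (Y * Y),
  [/\ entourage F, equiv_rel_set F & F `<=` [set p | d p.1 p.2 < n.+1%:R^-1]].
Proof.
apply: Ynonarch; apply/dunif.
by exists n.+1%:R^-1; rewrite ?invr_gt0 ?ltr0n.
Qed.

Lemma metric_complete_equiv_base : exists E, @complete_equiv_base Y E.
Proof.
have /choice[F HF] := equiv_ent_in_ball.
pose E n := [set p | forall i, (i < n)%N -> F i p].
have Eequiv n : equiv_rel_set (E n).
  split=> [x i _|x y Exy i /Exy|x y z Exy Eyz i ni];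
    have [_ [Frefl Fsym Ftrans] _] := HF i; [exact: Frefl|exact: Fsym|].
  exact: Ftrans (Exy i ni) (Eyz i ni).
have Edecr m n : (m <= n)%N -> E n `<=` E m.
  by move=> mn p Ep i im; apply: Ep; exact: leq_trans im mn.
have Eball n : E n.+1 `<=` [set p | d p.1 p.2 < n.+1%:R^-1].
  by move=> p /(_ n (ltnSn n)); case: (HF n) => _ _; apply.
have Eent n : entourage (E n).
  elim: n => [|n IH]; first by apply: filterS entourageT => p _ i.
  have [Fn _ _] := HF n.
  apply: filterS (filterI IH Fn) => p [Ep Fp] i.
  by rewrite ltnS leq_eqVlt => /predU1P[->//|]; exact: Ep.
exists E; split => //.
- move=> U /dunif[e e0 eU]; have [n ne] := archi_inv_succ e0.
  by exists n.+1 => p /Eball dp; apply: eU; exact: lt_trans dp ne.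
- move=> y z Eyz; case: dmetric => d0 /(_ y z)[+ _] _ _; apply.
  apply/eqP; rewrite eq_le d0 andbT leNgt; apply/negP => /archi_inv_succ[n nd].
  by have := lt_trans (Eball n _ (Eyz n.+1)) nd; rewrite ltxx.
move=> u Eu; have Euu := nested_equiv_chain Eequiv Edecr Eu.
have [y uy] : exists y, forall e, 0 < e -> exists N, forall n, (N <= n)%N -> d (u n) y < e.
  apply: dcomplete => e /archi_inv_succ[j je]; exists j.+1 => m n jm jn.
  apply: lt_trans je; apply: (Eball j (u m, u n)).
  have [_ Esym Etrans] := Eequiv j.+1.
  exact: Etrans (Esym _ _ (Euu _ _ jm)) (Euu _ _ jn).
exists y => n; have [e e0 eE] := (dunif (E n)).1 (Eent n).
have [N uNy] := uy e e0.
have [_ _ Etrans] := Eequiv n.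
apply: Etrans (Euu n (maxn n N) (leq_maxl _ _)) _.
by apply: eE; exact: uNy (leq_maxr _ _).
Qed.

End complete_equiv_base_of_metric.

Section Baire_space_onto.
Variables (K : choiceType) (Y : uniformType) (y0 : Y) (E : nat -> set (Y * Y)).
Variables (G : K -> set Y) (code : Y -> Bk K).
Hypothesis EB : complete_equiv_base E.
Hypothesis code_mem : forall z n, G (code z n) z.
Hypothesis code_sub : forall z n, G (code z n) `<=` [set w | E n.+1 (z, w)].

Let Erefl n z : E n (z, z).
Proof. by case: (equiv_base_equiv EB n). Qed.

Let Esym n z w : E n (z, w) -> E n (w, z).
Proof. by case: (equiv_base_equiv EB n) => _ + _; apply. Qed.

Let Etrans n z w v : E n (z, w) -> E n (w, v) -> E n (z, v).
Proof. by case: (equiv_base_equiv EB n) => _ _; apply. Qed.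

Definition next n p k : Y :=
  if pselect (exists q, G k q /\ E n (p, q)) is left ex then sval (cid ex) else p.

Fixpoint approx (x : Bk K) n : Y :=
  if n is m.+1 then next m (approx x m) (x m) else y0.

Lemma approx_succ x n : E n (approx x n, approx x n.+1).
Proof.
by rewrite /= /next; case: pselect => [ex|_]; [case: (svalP (cid ex))|exact: Erefl].
Qed.

Lemma approx_prefix x x' n : same_prefix n x x' -> approx x n = approx x' n.
Proof.
elim: n => [//|n IH] xx' /=.
by rewrite IH ?(xx' n (ltnSn n)) //; exact: same_prefix_leq (leqnSn n) xx'.
Qed.

Definition limit x : Y := sval (cid (equiv_base_complete EB (approx_succ x))).

Lemma approx_limit x n : E n (approx x n, limit x).
Proof. exact: (svalP (cid (equiv_base_complete EB (approx_succ x)))) n. Qed.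

Lemma limit_prefix x x' n : same_prefix n x x' -> E n (limit x, limit x').
Proof.
move=> /approx_prefix xx'; apply: Etrans (Esym (approx_limit x n)) _.
by rewrite xx'; exact: approx_limit.
Qed.

Lemma limit_tail x z n : E n (approx x n, z) ->
  (forall i, (n <= i)%N -> x i = code z i) -> limit x = z.
Proof.
move=> xz xcode.
have approx_z m : (n <= m)%N -> E m (approx x m, z).
  move=> /subnKC <-; elim: (m - n)%N => [|k IH]; first by rewrite addn0.
  rewrite addnS /= /next xcode ?leq_addr //.
  case: pselect => [ex|]; first by case: (svalP (cid ex)) => /code_sub /Esym.
  by case; exists z.
apply: (equiv_base_sep EB) => m.
apply: (equiv_base_decr EB (leq_maxl m n)).
exact: Etrans (Esym (approx_limit x _)) (approx_z _ (leq_maxr _ _)).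
Qed.

Lemma limit_code z : limit (code z) = z.
Proof. exact: (limit_tail (equiv_base0 EB _ _)). Qed.

Lemma limit_unif_continuous : unif_continuous limit.
Proof.
move=> U /(equiv_base_sub EB)[n EU].
by apply: filterS (prefix_entourage K n) => -[x x'] xx'; exact/EU/limit_prefix.
Qed.

Lemma limit_continuous : continuous limit.
Proof.
move=> x A /nbhsP[U /(equiv_base_sub EB)[n EU] UA].
apply/nbhsP; exists (prefix_ent n); first exact: prefix_entourage.
by move=> x' /set_mem xx'; apply: UA; apply/mem_set/EU/limit_prefix.
Qed.

Lemma limit_quotient_map : quotient_map limit.
Proof.
split=> [|y|]; [exact: limit_continuous|by exists (code y); exact: limit_code|].
move=> A; rewrite !openE => Aopen y Ay.
have /Aopen/nbhsP[V /Bk_entourageP[n nV] VA] : (limit @^-1` A) (code y).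
  by rewrite /preimage /= limit_code.
apply/nbhsP; exists (E n); first exact: equiv_base_entourage.
move=> z /set_mem yz; pose x := start_with n (code y) (code z).
have <- : limit x = z.
  apply: (@limit_tail _ _ n).
    rewrite -(approx_prefix (start_with_prefix (n := n) (code y) (code z))).
    by apply: Etrans (approx_limit _ n) _; rewrite limit_code.
  by move=> i ni; rewrite /x /start_with ltEnat /= ltnNge ni.
by have /mem_set/VA : V (code y, x) by apply: nV; exact: start_with_prefix.
Qed.

End Baire_space_onto.

Lemma weight_le_nbhs_base (Y : uniformType) (K : Type) : weight_le Y K ->
  exists G : K -> set Y, forall z U, nbhs z U -> exists2 k, G k z & G k `<=` U.
Proof.
move=> [B [_ Bbase] /pcard_surjP[G GB]].
exists G => z U /(Bbase z)[V [BV Vz] VU].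
by have [k _ GkV] := GB V BV; exists k; rewrite GkV.
Qed.

Theorem lemma6p2 (R : realType) (K : choiceType)
  (hK : infinite_set [set: K]) :
  in_class R K (Bk K) /\
  forall Y : uniformType, [set: Y] !=set0 -> in_class R K Y ->
    exists f : Bk K -> Y,
      unif_continuous f /\ (forall y, exists x, f x = y) /\ quotient_map f.
Proof.
split; first exact: Bk_in_class.
move=> Y [y0 _] [Ynonarch [d [dmetric dunif dcomplete]] Yweight].
have [E EB] := metric_complete_equiv_base Ynonarch dmetric dunif dcomplete.
have [G Gbase] := weight_le_nbhs_base Yweight.
have /choice[code codeP] : forall z : Y, exists c : Bk K, forall n,
    G (c n) z /\ G (c n) `<=` [set w | E n.+1 (z, w)].
  move=> z; suff /choice[c cP] : forall n, exists k,
      G k z /\ G k `<=` [set w | E n.+1 (z, w)] by exists c.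
  move=> n; have [|k Gkz GkE] := Gbase z [set w | E n.+1 (z, w)]; last by exists k.
  by apply/nbhsP; exists (E n.+1); [exact: equiv_base_entourage|move=> w /set_mem].
have fquot := limit_quotient_map y0 EB (fun z n => (codeP z n).1) (fun z n => (codeP z n).2).
exists (limit y0 G EB); split; first exact: limit_unif_continuous.
by have [_ fsurj _] := fquot.
Qed.
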